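(* The knowledge state algorithm $K_3$ for the $3$-cache problem is $\tfrac{11}{6}$-competitive (note $\tfrac{11}{6}=H_3=1+\tfrac12+\tfrac13$): there is a constant $K$ such that $E(\mathrm{cost}_{K_3}(\varrho))\le\tfrac{11}{6}\,\mathrm{cost}_{\mathrm{opt}}(\varrho)+K$ for every finite request sequence $\varrho$.
   Context: The $k$-cache problem: there is an infinite set $P$ of pages; the state set $\mathcal X$ is the set of $k$-element subsets of $P$ (cache contents), with a given initial cache $s^0$; the requests are the pages, $\mathcal R=P$; $d(x,y)=|x\setminus y|$; and $\mathrm{cost}(x,r,y)=2$ if $x=y$ and $r\notin x$; $\mathrm{cost}(x,r,y)=d(x,y)$ if $r\in x$ or $r\in y$; $\mathrm{cost}(x,r,y)=d(x,y)+1$ otherwise. For $\varrho=r^1\dots r^n$, $\mathrm{cost}_{\mathrm{opt}}(\varrho)$ is the minimum of $\sum_t\mathrm{cost}(x^{t-1},r^t,x^t)$ over $x^1,\dots,x^n\in\mathcal X$ with $x^0=s^0$. $\Pi$ is the set of finitely supported probability distributions on $\mathcal X$; for $\pi,\pi'\in\Pi$, $\mathrm{cost}(\pi,r,\pi')$ is the minimum of $\sum_{x,y}\gamma(x,y)\mathrm{cost}(x,r,y)$ over distributions $\gamma$ on $\mathrm{supp}(\pi)\times\mathrm{supp}(\pi')$ with marginals $\pi,\pi'$. Bar notation: a string $\alpha$ of distinct page names and exactly $k$ bars, with at least $i$ page names to the left of the $i$-th bar, denotes the estimator $\omega_\alpha(y)=\min_{x\in S_\alpha}d(x,y)$, where $S_\alpha$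 is the set of configurations $x$ such that for each $i=1,\dots,k$ at least $i$ elements of $x$ are written to the left of the $i$-th bar. Algorithm $K_3$ ($k=3$; letters $a,\dots,f$ denote distinct pages; a configuration $\{x,y,z\}$ is written $xyz$). It is a randomized algorithm whose state is a pair (distribution, estimator). States: $A^{a,b,c}=(abc,\ abc|||)$ (symmetric in $a,b,c$); $B^{a,b,c,d}=(\tfrac13abc+\tfrac13abd+\tfrac13acd,\ a|bcd||)$ (symmetric in $b,c,d$); $C^{a,b,c,d}=(\tfrac12abc+\tfrac12abd,\ ab||cd|)$ (symmetric in $a,b$ and in $c,d$); $D^{a,b,c,d,e}=(\tfrac16(abc+abd+abe+acd+ace+ade),\ a|bcde||)$ (symmetric in $b,c,d,e$); $E^{a,b,c,d,e}=(\tfrac12abc+\tfrac14abd+\tfrac14abe,\ ab||cde|)$ (symmetric in $a,b$ and in $d,e$); $F^{a,b,c,d,e}=(\tfrac12abc+\tfrac18(abd+abe+acd+ace),\ a|bc|de|)$ (symmetric in $b,c$ and in $d,e$). Initial state $A^{a,b,c}$ with $s^0=\{a,b,c\}$. Transitions: From $A^{a,b,c}$: request $a,b$ or $c$: stay; request $d\notin\{a,b,c\}$: $B^{d,a,b,c}$. From $B^{a,b,c,d}$: request $a$: stay; request $b$: $C^{a,b,c,d}$ (symmetrically $c$: $C^{a,c,b,d}$, $d$: $C^{a,d,b,c}$); request $e\notin\{a,b,c,d\}$: $D^{e,a,b,c,d}$. From $C^{a,b,c,d}$: request $a$ or $b$: stay; request $c$: $A^{a,b,c}$; request $d$: $A^{a,b,d}$;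 request $e\notin\{a,b,c,d\}$: $F^{e,a,b,c,d}$. From $D^{a,b,c,d,e}$: request $a$: stay; request $x\in\{b,c,d,e\}$: $E^{a,x,y,z,w}$ where $y,z,w$ are the other three pages of $\{b,c,d,e\}$ in a fixed order; request $f\notin\{a,\dots,e\}$: each of the ten states $A^{f,u,v}$, $\{u,v\}\subseteq\{a,b,c,d,e\}$, with probability $\tfrac1{10}$. From $E^{a,b,c,d,e}$: request $a$ or $b$: stay; request $c$: $A^{a,b,c}$; $d$: $A^{a,b,d}$; $e$: $A^{a,b,e}$; request $f\notin\{a,\dots,e\}$: $A^{f,a,b}$. From $F^{a,b,c,d,e}$: request $a$: stay; $b$: $E^{a,b,c,d,e}$; $c$: $E^{a,c,b,d,e}$; $d$: $C^{a,d,b,c}$; $e$: $C^{a,e,b,c}$; request $f\notin\{a,\dots,e\}$: each of $C^{f,a,b,c},C^{f,b,a,c},C^{f,c,a,b},C^{f,a,d,e},C^{f,b,d,e},C^{f,c,d,e}$ with probability $\tfrac16$. The cost of a step from state $(\pi,\omega)$ on request $r$, whose successor states $(\pi_i,\omega_i)$ have probabilities $\lambda_i$, is $\mathrm{cost}(\pi,r,\sum_i\lambda_i\pi_i)$; $\mathrm{cost}_{K_3}(\varrho)$ is the (random) sum of step costs. *)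

From HB Require Import structures.
From mathcomp Require Import all_boot all_order all_algebra finmap.
From mathcomp Require Import boolp classical_sets reals.
Set Implicit Arguments. Unset Strict Implicit. Unset Printing Implicit Defensive.
Import Order.TTheory GRing.Theory Num.Theory.
Local Open Scope ring_scope.
Local Open Scope classical_set_scope.

Definition page := nat.
Definition config := {fset nat}.
Definition is_config (x : config) : bool := (#|` x| == 3)%N.

Definition dist (x y : config) : nat := #|` (x `\` y)%fset|.

Definition cost (x : config) (r : page) (y : config) : nat :=
  if (x == y) && (r \notin x) then 2%N
  else if (r \in x) || (r \in y) then dist x y
  else (dist x y).+1.

(* cost of a trajectory x^0 = x, x^1, ..., x^n (xs = [x^1;..;x^n]) *)
Fixpoint pathcost (x : config) (rho : seq page) (xs : seq config) : nat :=
  match rho, xs with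
  | r :: rho', y :: xs' => (cost x r y + pathcost y rho' xs')%N
  | _, _ => 0%N
  end.

Definition cost_opt {R : realType} (s0 : config) (rho : seq page) : R :=
  inf [set c : R | exists xs : seq config,
         [/\ size xs = size rho, all is_config xs & c = (pathcost s0 rho xs)%:R]].

(* Finitely supported distributions, given as weighted lists
   (the probability of x is the total weight of the entries equal to x). *)
Definition distr (R : realType) := seq (R * config).

Definition pmf {R : realType} (p : distr R) (x : config) : R :=
  \sum_(q <- p | q.2 == x) q.1.

Definition supp {R : realType} (p : distr R) : seq config :=
  [seq x <- undup (map snd p) | 0 < pmf p x].

Definition coupling_costs {R : realType} (p : distr R) (r : page) (p' : distr R)
  : set R :=
  [set c : R | exists gamma : config -> config -> R,
     [/\ forall x y, 0 <= gamma x y,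
         forall x, x \in supp p -> \sum_(y <- supp p') gamma x y = pmf p x,
         forall y, y \in supp p' -> \sum_(x <- supp p) gamma x y = pmf p' y
       & c = \sum_(x <- supp p) \sum_(y <- supp p') gamma x y * (cost x r y)%:R]].

Definition dcost {R : realType} (p : distr R) (r : page) (p' : distr R) : R :=
  inf (coupling_costs p r p').

(* States of K_3 (the estimator component does not influence the transitions
   nor the costs, so a state is determined by its type and its pages). *)
Inductive kstate :=
| SA of page & page & page
| SB of page & page & page & page
| SC of page & page & page & page
| SD of page & page & page & page & page
| SE of page & page & page & page & page
| SF of page & page & page & page & page.

Definition c3 (a b c : page) : config := [fset a; b; c]%fset.

Definition kdist {R : realType} (s : kstate) : distr R :=
  match s with
  | SA a b c => [:: (1, c3 a b c)]
  | SB a b c d => [:: (1/3, c3 a b c); (1/3, c3 a b d); (1/3, c3 a c d)]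
  | SC a b c d => [:: (1/2, c3 a b c); (1/2, c3 a b d)]
  | SD a b c d e => [:: (1/6, c3 a b c); (1/6, c3 a b d); (1/6, c3 a b e);
                        (1/6, c3 a c d); (1/6, c3 a c e); (1/6, c3 a d e)]
  | SE a b c d e => [:: (1/2, c3 a b c); (1/4, c3 a b d); (1/4, c3 a b e)]
  | SF a b c d e => [:: (1/2, c3 a b c); (1/8, c3 a b d); (1/8, c3 a b e);
                        (1/8, c3 a c d); (1/8, c3 a c e)]
  end.

Definition ktrans {R : realType} (s : kstate) (r : page) : seq (R * kstate) :=
  match s with
  | SA a b c =>
      if r \in [:: a; b; c] then [:: (1, s)] else [:: (1, SB r a b c)]
  | SB a b c d =>
      if r == a then [:: (1, s)]
      else if r == b then [:: (1, SC a b c d)]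
      else if r == c then [:: (1, SC a c b d)]
      else if r == d then [:: (1, SC a d b c)]
      else [:: (1, SD r a b c d)]
  | SC a b c d =>
      if (r == a) || (r == b) then [:: (1, s)]
      else if r == c then [:: (1, SA a b c)]
      else if r == d then [:: (1, SA a b d)]
      else [:: (1, SF r a b c d)]
  | SD a b c d e =>
      if r == a then [:: (1, s)]
      else if r == b then [:: (1, SE a b c d e)]
      else if r == c then [:: (1, SE a c b d e)]
      else if r == d then [:: (1, SE a d b c e)]
      else if r == e then [:: (1, SE a e b c d)]
      else [:: (1/10, SA r a b); (1/10, SA r a c); (1/10, SA r a d);
               (1/10, SA r a e); (1/10, SA r b c); (1/10, SA r b d);
               (1/10, SA r b e); (1/10, SA r c d); (1/10, SA r c e);
               (1/10, SA r d e)]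
  | SE a b c d e =>
      if (r == a) || (r == b) then [:: (1, s)]
      else if r == c then [:: (1, SA a b c)]
      else if r == d then [:: (1, SA a b d)]
      else if r == e then [:: (1, SA a b e)]
      else [:: (1, SA r a b)]
  | SF a b c d e =>
      if r == a then [:: (1, s)]
      else if r == b then [:: (1, SE a b c d e)]
      else if r == c then [:: (1, SE a c b d e)]
      else if r == d then [:: (1, SC a d b c)]
      else if r == e then [:: (1, SC a e b c)]
      else [:: (1/6, SC r a b c); (1/6, SC r b a c); (1/6, SC r c a b);
               (1/6, SC r a d e); (1/6, SC r b d e); (1/6, SC r c d e)]
  end.

Definition mixture {R : realType} (l : seq (R * kstate)) : distr R :=
  flatten [seq [seq (p.1 * q.1, q.2) | q <- kdist p.2] | p <- l].

Definition kstep_cost {R : realType} (s : kstate) (r : page) : R :=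
  dcost (kdist s) r (mixture (ktrans s r)).

Fixpoint kexp_cost {R : realType} (s : kstate) (rho : seq page) : R :=
  match rho with
  | [::] => 0
  | r :: rho' => kstep_cost s r + \sum_(p <- ktrans s r) p.1 * kexp_cost p.2 rho'
  end.

From HB Require Import structures.
From mathcomp Require Import all_boot all_order all_algebra finmap.
From mathcomp Require Import boolp classical_sets reals.
From mathcomp Require Import lra zify ring.
Set Implicit Arguments. Unset Strict Implicit. Unset Printing Implicit Defensive.
Import Order.TTheory GRing.Theory Num.Theory.
Local Open Scope ring_scope.

(* For a state [s] of K_3 and a configuration [y] of
   the adversary put Phi(s, y) = 11/6 omega_s(y) + h(s)/12, where omega_s is the
   estimator of [s] and h(s) an offset depending only on the type of [s], with h = 0
   for the initial type A.  Since omega_s(x) + cost(x, r, y) dominates the cost of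
   serving r into y from the best configuration of S_s, it suffices to prove, for all
   states with distinct pages, requests r and configurations y,
     E[step cost] + E[Phi(s', y)] <= 11/6 min_(z in S_s) cost(z, r, y) + h(s)/12.
   Summed along any adversary trajectory this telescopes, and Phi(A^abc, abc) = 0, so
   the additive constant is 0.  Each instance of the inequality is certified by a
   transport plan between the current distribution and the mixture of the successor
   distributions, which bounds the step cost; what remains depends on y only through
   which of the at most six pages involved lie in y. *)

Section Distance.
Local Open Scope fset_scope.

Lemma cardfsDU1 (A y : {fset nat}) (c : nat) :
  #|` (A `|` [fset c]) `\` y| = (#|` A `\` y| + ((c \notin y) && (c \notin A)))%N.
Proof.
rewrite fsetUC; have [cy|cy] := boolP (c \in y).
  rewrite addn0; congr #|` _|; apply/fsetP => q; rewrite !inE.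
  by case: eqP => // ->; rewrite cy.
have -> : (c |` A) `\` y = c |` (A `\` y).
  by apply/fsetP => q; rewrite !inE; case: eqP => // ->; rewrite cy.
by rewrite cardfsU1 !inE cy /= addnC.
Qed.

Lemma cardfs1D (u : nat) (y : {fset nat}) : #|` [fset u] `\` y| = (u \notin y).
Proof.
have [uy|uy] /= := boolP (u \in y).
  apply/eqP; rewrite cardfs_eq0; apply/eqP.
  by apply/fsetP => q; rewrite !inE; case: (q =P u) => [->|_]; rewrite ?uy ?andbF.
have -> : [fset u] `\` y = [fset u].
  by apply/fsetP => q; rewrite !inE; case: (q =P u) => [->|_]; rewrite ?uy ?andbF.
by rewrite cardfs1.
Qed.

Lemma dist_c3 u v w y :
  dist (c3 u v w) y = ((u \notin y) + ((v \notin y) && (v != u))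
                       + ((w \notin y) && (w != u) && (w != v)))%N.
Proof. by rewrite /dist /c3 cardfsDU1 cardfsDU1 cardfs1D !inE negb_or !andbA. Qed.

Lemma in_c3 q u v w : (q \in c3 u v w) = [|| q == u, q == v | q == w].
Proof. by rewrite /c3 !inE orbA. Qed.

Lemma card_c3 u v w : uniq [:: u; v; w] -> #|` c3 u v w| = 3%N.
Proof.
have := dist_c3 u v w fset0; rewrite /dist fsetD0 => ->.
rewrite /= !inE !negb_or => /andP [/andP [uv uw] /andP [vw _]].
by rewrite eq_sym uv eq_sym uw eq_sym vw.
Qed.

Lemma dist_eq0 (x y : config) : (dist x y == 0%N) = (x `<=` y).
Proof. by rewrite /dist cardfs_eq0 fsetD_eq0. Qed.

Lemma dist_xx (x : config) : dist x x = 0%N.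
Proof. by apply/eqP; rewrite dist_eq0. Qed.

Lemma eq_configE (x y : config) : (x == y) = (dist x y == 0%N) && (dist y x == 0%N).
Proof. by rewrite !dist_eq0 eqEfsubset. Qed.

Lemma eq_config_card (x y : config) : #|` x| = #|` y| -> (x == y) = (dist x y == 0%N).
Proof.
move=> hs; rewrite eq_configE dist_eq0; case sxy: (x `<=` y) => //=.
rewrite dist_eq0; move/(fsubset_cardP hs): sxy => exy.
by apply/fsubsetP => q; rewrite exy.
Qed.

Lemma dist_sym (x y : config) : #|` x| = #|` y| -> dist x y = dist y x.
Proof. by move=> h; rewrite /dist !cardfsD h fsetIC. Qed.

Lemma dist_triangle (z x y : config) : (dist z y <= dist z x + dist x y)%N.
Proof.
rewrite /dist; have S : z `\` y `<=` (z `\` x) `|` (x `\` y).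
  by apply/fsubsetP => q; rewrite !inE; case: (q \in x); case: (q \in y); case: (q \in z).
by apply: leq_trans (fsubset_leq_card S) _; rewrite cardfsU leq_subr.
Qed.

(* A page that enters and leaves again on the way through [x] is paid twice. *)
Lemma dist_triangle_detour (z x y : config) (r : page) :
  r \notin z -> r \in x -> r \notin y -> (dist z y + 1 <= dist z x + dist x y)%N.
Proof.
move=> rz rx ry; rewrite /dist [#|` x `\` y|](cardfsD1 r) !inE rx ry /=.
rewrite addnCA [(_ + 1)%N]addnC leq_add2l.
have S : z `\` y `<=` (z `\` x) `|` ((x `\` y) `\ r).
  apply/fsubsetP => q; rewrite !inE.
  case: (q =P r) => [->|_]; first by rewrite (negbTE rz) andbF.
  by case: (q \in x); case: (q \in y); case: (q \in z).
by apply: leq_trans (fsubset_leq_card S) _; rewrite cardfsU leq_subr.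
Qed.

Lemma costE (x : config) (r : page) (y : config) : cost x r y =
  (dist x y + ((r \notin x) && (r \notin y)) + ((x == y) && (r \notin x)))%N.
Proof.
rewrite /cost; have [->|nxy] := eqVneq x y; rewrite ?eqxx /=.
  by rewrite dist_xx; case: (r \in y).
by case: (r \in x); case: (r \in y); rewrite /= ?addn0 ?addn1.
Qed.

Lemma cost_triangle (z x y : config) (r : page) :
  #|` z| = #|` x| -> #|` x| = #|` y| -> (cost z r y <= dist z x + cost x r y)%N.
Proof.
move=> hzx hxy; rewrite !costE; have := dist_triangle z x y.
have [<-|nxy] := eqVneq x y.
  rewrite dist_xx; have [->|_] := eqVneq z x; first by case: (r \in z); lia.
  by case: (r \in z); case: (r \in x); rewrite /=; lia.
have x_y : (0 < dist x y)%N by rewrite lt0n -eq_config_card.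
have [ezy|nzy] := eqVneq z y.
  subst z; rewrite dist_xx (dist_sym hzx).
  by case: (r \in x); case: (r \in y); rewrite /=; lia.
case rx: (r \in x); case ry: (r \in y); case rz: (r \in z); rewrite /= ?addn0 //; try lia.
by have := dist_triangle_detour (negbT rz) rx (negbT ry); lia.
Qed.

Lemma costE_card (x : config) (r : page) (y : config) : #|` x| = #|` y| ->
  cost x r y = (dist x y + ((r \notin x) && (r \notin y))
                + ((dist x y == 0%N) && (r \notin x)))%N.
Proof. by move=> hxy; rewrite costE eq_config_card. Qed.

Lemma count_mem_le_card (y : config) (s : seq nat) :
  (count (fun q => q \in y) (undup s) <= #|` y|)%N.
Proof.
rewrite -size_filter; apply: uniq_leq_size; first by rewrite filter_uniq ?undup_uniq.
by move=> q; rewrite mem_filter => /andP [].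
Qed.

End Distance.

Definition pages (s : kstate) : seq page :=
  match s with
  | SA a b c => [:: a; b; c]
  | SB a b c d | SC a b c d => [:: a; b; c; d]
  | SD a b c d e | SE a b c d e | SF a b c d e => [:: a; b; c; d; e]
  end.

Definition wf (s : kstate) := uniq (pages s).

(* [distinct_pages] turns the distinctness of the pages of a state into rewrite
   rules [(u == v) = false], which [page_simpl] uses to evaluate the transitions,
   distributions and estimators of that state symbolically. *)
Ltac eqF_hyps := repeat match goal with
  | H : is_true (_ && _) |- _ => case/andP: H => ? ?
  | H : is_true (?x != ?y) |- _ =>
      let E := fresh "E" in move/negbTE: H => H; have E := H; rewrite eq_sym in E
  end.

Ltac page_simpl := rewrite /= ?inE;
  repeat match goal with E : (_ == _) = false |- _ => progress rewrite ?E end;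
  rewrite ?eqxx /=.

Ltac distinct_pages h := move: h; rewrite /wf /= !inE !negb_or => h; eqF_hyps.

Ltac case_ifs := repeat (case: ifP => [_|/negbT];
  [| rewrite ?inE ?negb_or => ?; eqF_hyps]).

(* The set S_alpha of the estimator of [s] is [est_head s :: est_tail s], and
   [omega s] below is the estimator omega_alpha itself. *)
Definition est_head (s : kstate) : config :=
  match s with
  | SA a b c | SB a b c _ | SC a b c _ | SD a b c _ _ | SE a b c _ _ | SF a b c _ _ =>
      c3 a b c
  end.

Definition est_tail (s : kstate) : seq config :=
  match s with
  | SA _ _ _ => [::]
  | SB a b c d => [:: c3 a b d; c3 a c d]
  | SC a b c d => [:: c3 a b d]
  | SD a b c d e => [:: c3 a b d; c3 a b e; c3 a c d; c3 a c e; c3 a d e]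
  | SE a b c d e => [:: c3 a b d; c3 a b e]
  | SF a b c d e => [:: c3 a b d; c3 a b e; c3 a c d; c3 a c e]
  end.

Definition minl (f : config -> nat) (z0 : config) (l : seq config) : nat :=
  foldr (fun z m => minn (f z) m) (f z0) l.

Lemma minl_mem f z0 l : exists2 z, z \in z0 :: l & minl f z0 l = f z.
Proof.
elim: l => [|z l [w wl e]] /=; first by exists z0; rewrite ?mem_head.
rewrite e /minn; case: ltnP => _; first by exists z => //; rewrite !inE eqxx orbT.
by exists w => //; move: wl; rewrite !inE => /orP [->|->]; rewrite ?orbT.
Qed.

Lemma minl_le f z0 l z : z \in z0 :: l -> (minl f z0 l <= f z)%N.
Proof.
elim: l => [|w l IH] /=; first by rewrite inE => /eqP ->.
rewrite !inE geq_min => /or3P [hz|/eqP ->|hz]; rewrite ?leqnn ?orbT //.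
- by rewrite IH ?orbT // inE hz.
- by rewrite IH ?orbT // inE hz orbT.
Qed.

Lemma eq_in_minl f g z0 l : {in z0 :: l, f =1 g} -> minl f z0 l = minl g z0 l.
Proof.
elim: l => [|w l IH] fg /=; first by apply: fg; rewrite mem_head.
rewrite fg ?IH // => [z|]; last by rewrite !inE eqxx orbT.
by rewrite inE => /orP [/eqP ->|zl]; apply: fg; rewrite !inE ?eqxx ?zl ?orbT.
Qed.

Definition omega (s : kstate) (y : config) : nat :=
  minl (fun z => dist z y) (est_head s) (est_tail s).

Definition ocost (s : kstate) (r : page) (y : config) : nat :=
  minl (fun z => cost z r y) (est_head s) (est_tail s).

Lemma card_estimator s z : wf s -> z \in est_head s :: est_tail s -> #|` z| = 3%N.
Proof.
move=> ws zS; apply/eqP; move: z zS; apply/allP.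
by case: s ws => [a b c|a b c d|a b c d|a b c d e|a b c d e|a b c d e] ws;
  distinct_pages ws; rewrite !card_c3 //; page_simpl.
Qed.

Lemma ocostE s r y : wf s -> #|` y| = 3%N ->
  ocost s r y = minl (fun z => dist z y + ((r \notin z) && (r \notin y))
                               + ((dist z y == 0%N) && (r \notin z)))%N
                     (est_head s) (est_tail s).
Proof.
move=> ws hy; apply: eq_in_minl => z zS.
by rewrite costE_card // hy (card_estimator ws zS).
Qed.

Lemma ocost_le s x r y : wf s -> #|` x| = 3%N -> #|` y| = 3%N ->
  (ocost s r y <= omega s x + cost x r y)%N.
Proof.
move=> ws hx hy; rewrite /omega /ocost.
have [z zS ->] := minl_mem (fun z => dist z x) (est_head s) (est_tail s).
apply: leq_trans (minl_le _ zS) _.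
by apply: cost_triangle; rewrite ?hx ?hy ?(card_estimator ws zS).
Qed.

Section Competitive.
Variable R : realType.

Lemma ktrans_wf s r : wf s -> all (fun p => wf p.2) (@ktrans R s r).
Proof.
by case: s => [a b c|a b c d|a b c d|a b c d e|a b c d e|a b c d e] ws;
  distinct_pages ws; rewrite /ktrans; case_ifs; rewrite /wf; page_simpl.
Qed.

Lemma ktrans_sum1 s r : \sum_(p <- @ktrans R s r) p.1 = 1.
Proof.
by case: s => [a b c|a b c d|a b c d|a b c d e|a b c d e|a b c d e];
  rewrite /ktrans; case_ifs; rewrite !big_cons big_nil /=; lra.
Qed.

Lemma ktrans_ge0 s r : all (fun p => 0 <= p.1) (@ktrans R s r).
Proof.
by case: s => [a b c|a b c d|a b c d|a b c d e|a b c d e|a b c d e];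
  rewrite /ktrans; case_ifs; rewrite /= !andbT; repeat (apply/andP; split); lra.
Qed.

Definition phi_offset (s : kstate) : nat :=
  match s with
  | SA _ _ _ => 0 | SB _ _ _ _ => 10 | SC _ _ _ _ => 6
  | SD _ _ _ _ _ => 18 | SE _ _ _ _ _ => 12 | SF _ _ _ _ _ => 15
  end.

Definition Phi (s : kstate) (y : config) : R :=
  11/6 * (omega s y)%:R + (phi_offset s)%:R / 12.

Definition amortized (s : kstate) (r : page) : Prop :=
  forall y, #|` y| = 3%N ->
    kstep_cost s r + \sum_(p <- ktrans s r) p.1 * Phi p.2 y <=
    11/6 * (ocost s r y)%:R + (phi_offset s)%:R / 12.

Lemma Phi_ge0 s y : 0 <= Phi s y.
Proof. by rewrite /Phi; have := ler0n R (omega s y); have := ler0n R (phi_offset s); lra. Qed.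

Hypothesis amortized_wf : forall s r, wf s -> amortized s r.

Lemma kexp_cost_le_Phi rho s x xs : wf s -> #|` x| = 3%N ->
  size xs = size rho -> all is_config xs ->
  kexp_cost s rho <= Phi s x + 11/6 * (pathcost x rho xs)%:R.
Proof.
elim: rho s x xs => [|r rho IH] s x [|y xs] //= ws hx.
  by rewrite mulr0 addr0 Phi_ge0.
move=> [sz] /andP [/eqP hy xs3].
pose tail : R := 11/6 * (pathcost y rho xs)%:R.
have step_IH : \sum_(p <- ktrans s r) p.1 * kexp_cost p.2 rho <=
               \sum_(p <- ktrans s r) p.1 * Phi p.2 y + tail.
  rewrite -[tail]mul1r -(ktrans_sum1 s r) mulr_suml -big_split /=.
  have := ktrans_ge0 s r; have := ktrans_wf r ws.
  elim: (ktrans s r) => [|p l IHl] /=; first by rewrite !big_nil.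
  case/andP=> wp wl /andP [p0 l0]; rewrite !big_cons -mulrDr.
  by apply: lerD; [rewrite ler_wpM2l ?IH | exact: IHl].
have amort := amortized_wf r ws hy.
have := ocost_le r ws hx hy; rewrite -(ler_nat R) natrD => oc_le.
move: step_IH amort; rewrite natrD /Phi /tail => step_IH amort; lra.
Qed.

Lemma kexp_cost_le_opt a b c rho : uniq [:: a; b; c] ->
  @kexp_cost R (SA a b c) rho <= 11/6 * cost_opt (c3 a b c) rho.
Proof.
move=> abc; have abc3 := card_c3 abc.
have Phi0 : Phi (SA a b c) (c3 a b c) = 0 by rewrite /Phi /omega /= dist_xx mulr0 add0r mul0r.
suff : @kexp_cost R (SA a b c) rho * (6/11) <= cost_opt (c3 a b c) rho by lra.
apply: lb_le_inf.
  exists (pathcost (c3 a b c) rho (nseq (size rho) (c3 a b c)))%:R.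
  exists (nseq (size rho) (c3 a b c)); split; rewrite ?size_nseq //.
  by rewrite all_nseq /is_config abc3 orbT.
move=> _ [xs [sz xs3 ->]].
by have := kexp_cost_le_Phi (s := SA a b c) abc abc3 sz xs3; rewrite Phi0 add0r; lra.
Qed.

End Competitive.

Definition nth_config (P : seq (nat * config)) (i : nat) : config := (nth (0%N, fset0) P i).2.

Definition marginal (key : nat * nat * nat -> nat) (n : nat) (tau : seq (nat * nat * nat)) :=
  [seq sumn [seq t.2 | t <- tau & key t == i] | i <- iota 0 n].

(* A transport plan from the weighted list [P] to [P']: each triple [(i, j, m)]
   moves mass [m] from entry [i] of [P] to entry [j] of [P']. *)
Definition is_plan (P P' : seq (nat * config)) (tau : seq (nat * nat * nat)) :=
  [&& all (fun t => (t.1.1 < size P) && (t.1.2 < size P'))%N tau,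
      marginal (fun t => t.1.1) (size P) tau == map fst P
    & marginal (fun t => t.1.2) (size P') tau == map fst P'].

Definition plan_cost r (P P' : seq (nat * config)) (tau : seq (nat * nat * nat)) :=
  sumn [seq t.2 * cost (nth_config P t.1.1) r (nth_config P' t.1.2) | t <- tau].

Lemma sum_by_key (tau : seq (nat * nat * nat)) key n (g : pred nat) :
  all (fun t => key t < n)%N tau ->
  (\sum_(t <- tau | g (key t)) t.2
   = \sum_(i <- iota 0 n | g i) \sum_(t <- tau | key t == i) t.2)%N.
Proof.
have ifD (c : bool) (a b : nat) : (if c then a + b else b)%N = (c * a + b)%N.
  by case: c; rewrite ?mul1n.
elim: tau => [|t tau IH] /=; first by rewrite big_nil big1 // => i _; rewrite big_nil.
case/andP=> tn taun; rewrite big_cons IH // ifD.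
under [RHS]eq_bigr => i _ do rewrite big_cons ifD.
rewrite big_split /=; congr (_ + _)%N; rewrite -big_filter.
have [gt|gt] := boolP (g (key t)).
  rewrite (bigD1_seq (key t)) /= ?filter_uniq ?iota_uniq //; last first.
    by rewrite mem_filter gt mem_iota add0n tn.
  by rewrite eqxx big1 ?addn0 // => i; rewrite eq_sym => /negbTE ->.
rewrite big_seq big1 // => i; rewrite mem_filter => /andP [gi _].
by case: eqP => // e; move: gt; rewrite e gi.
Qed.

Lemma sum_marginal (tau : seq (nat * nat * nat)) (P : seq (nat * config)) key x :
  all (fun t => key t < size P)%N tau -> marginal key (size P) tau = map fst P ->
  (\sum_(t <- tau | nth_config P (key t) == x) t.2 = \sum_(q <- P | q.2 == x) q.1)%N.
Proof.
move=> tauP margP; rewrite (@sum_by_key tau key (size P) (fun i => nth_config P i == x) tauP).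
rewrite (big_nth (0%N, fset0)) /index_iota subn0 big_seq_cond [RHS]big_seq_cond.
apply: eq_bigr => i /andP [iP _]; move: iP; rewrite mem_iota add0n => iP.
have := congr1 (nth 0%N ^~ i) margP.
rewrite (nth_map 0%N) ?size_iota // (nth_map (0%N, fset0)) // nth_iota //.
by rewrite add0n sumnE big_map big_filter.
Qed.

Section TransportPlans.
Variable R : realType.

Definition nat_distr (D : nat) (P : seq (nat * config)) : distr R :=
  [seq ((q.1)%:R / D%:R, q.2) | q <- P].

Lemma dcost_le_coupling (p p' : distr R) r (gamma : config -> config -> R) :
  (forall x y, 0 <= gamma x y) ->
  (forall x, x \in supp p -> \sum_(y <- supp p') gamma x y = pmf p x) ->
  (forall y, y \in supp p' -> \sum_(x <- supp p) gamma x y = pmf p' y) ->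
  dcost p r p' <= \sum_(x <- supp p) \sum_(y <- supp p') gamma x y * (cost x r y)%:R.
Proof.
move=> g0 rows cols; apply: ge_inf; last by exists gamma; split.
exists 0 => _ [g [gp _ _ ->]].
by apply: sumr_ge0 => x _; apply: sumr_ge0 => y _; apply: mulr_ge0.
Qed.

Lemma sum_pick (s : seq config) v (F : config -> R) : uniq s -> v \in s ->
  \sum_(y <- s) (v == y)%:R * F y = F v.
Proof.
move=> us vs; rewrite (bigD1_seq v) //= eqxx mul1r big1 ?addr0 // => y.
by rewrite eq_sym => /negbTE ->; rewrite mul0r.
Qed.

Lemma pmf_nat_distr D P x :
  pmf (nat_distr D P) x = (\sum_(q <- P | q.2 == x) q.1)%:R / D%:R.
Proof. by rewrite /pmf /nat_distr big_map /= natr_sum mulr_suml. Qed.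

Lemma mem_supp_nat_distr D P x : (0 < D)%N -> all (fun q => 0 < q.1)%N P ->
  x \in map snd P -> x \in supp (nat_distr D P).
Proof.
move=> D0 Ppos xP; rewrite /supp mem_filter mem_undup -map_comp xP andbT.
rewrite pmf_nat_distr divr_gt0 ?ltr0n //.
elim: P Ppos xP => [|q P IH] //= /andP [q0 Ppos]; rewrite inE big_cons.
case: eqP => [<- _|_ /= xP]; first by rewrite eqxx addn_gt0 q0.
by case: (q.2 == x); rewrite ?addn_gt0 IH ?orbT.
Qed.

Lemma uniq_supp (p : distr R) : uniq (supp p).
Proof. by rewrite /supp filter_uniq ?undup_uniq. Qed.

Lemma nth_config_mem (P : seq (nat * config)) i :
  (i < size P)%N -> nth_config P i \in map snd P.
Proof. by move=> iP; rewrite /nth_config -(nth_map _ fset0) ?mem_nth ?size_map. Qed.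

Lemma sum_marginal_pmf (tau : seq (nat * nat * nat)) (P : seq (nat * config)) key D x :
  all (fun t => key t < size P)%N tau -> marginal key (size P) tau = map fst P ->
  \sum_(t <- tau) (nth_config P (key t) == x)%:R * ((t.2)%:R / D%:R) = pmf (nat_distr D P) x.
Proof.
move=> tauP margP; rewrite pmf_nat_distr -(sum_marginal x tauP margP) natr_sum mulr_suml.
by rewrite [RHS]big_mkcond; apply: eq_bigr => t _; case: (_ == x); rewrite ?mul1r ?mul0r.
Qed.

Lemma dcost_le_plan (D : nat) (P P' : seq (nat * config)) tau r :
  (0 < D)%N -> all (fun q => 0 < q.1)%N P -> all (fun q => 0 < q.1)%N P' ->
  is_plan P P' tau ->
  dcost (nat_distr D P) r (nat_distr D P') <= (plan_cost r P P' tau)%:R / D%:R.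
Proof.
move=> D0 Ppos P'pos /and3P [bounds /eqP rows /eqP cols].
have bounds1 : all (fun t => t.1.1 < size P)%N tau by apply: sub_all bounds => t /andP [].
have bounds2 : all (fun t => t.1.2 < size P')%N tau by apply: sub_all bounds => t /andP [].
have supp1 t : t \in tau -> nth_config P t.1.1 \in supp (nat_distr D P).
  by move=> ht; apply/mem_supp_nat_distr/nth_config_mem => //; exact: (allP bounds1).
have supp2 t : t \in tau -> nth_config P' t.1.2 \in supp (nat_distr D P').
  by move=> ht; apply/mem_supp_nat_distr/nth_config_mem => //; exact: (allP bounds2).
pose c (t : nat * nat * nat) : R := (t.2)%:R / D%:R.
pose gamma x y :=
  \sum_(t <- tau) (nth_config P t.1.1 == x)%:R * ((nth_config P' t.1.2 == y)%:R * c t).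
have c0 t : 0 <= c t by rewrite divr_ge0.
apply: le_trans (@dcost_le_coupling _ _ r gamma _ _ _) _.
- move=> x y; apply: sumr_ge0 => t _; apply: mulr_ge0 => //; apply: mulr_ge0 => //.
- move=> x _; rewrite /gamma exchange_big /= -(sum_marginal_pmf D x bounds1 rows).
  rewrite big_seq_cond [RHS]big_seq_cond; apply: eq_bigr => t /andP [ht _].
  by rewrite -big_distrr /= (sum_pick (fun=> c t)) ?uniq_supp ?supp2.
- move=> y _; rewrite /gamma exchange_big /= -(sum_marginal_pmf D y bounds2 cols).
  rewrite big_seq_cond [RHS]big_seq_cond; apply: eq_bigr => t /andP [ht _].
  under eq_bigr => x _ do rewrite mulrCA.
  by rewrite -big_distrr /= (sum_pick (fun=> c t)) ?uniq_supp ?supp1.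
rewrite le_eqVlt; apply/orP; left; apply/eqP; rewrite /gamma.
under eq_bigr => x _ do under eq_bigr => y _ do rewrite mulr_suml.
under eq_bigr => x _ do rewrite exchange_big /=.
rewrite exchange_big /= /plan_cost sumnE big_map natr_sum mulr_suml.
rewrite big_seq_cond [RHS]big_seq_cond; apply: eq_bigr => t /andP [ht _].
under eq_bigr => x _ do under eq_bigr => y _ do rewrite -mulrA -(mulrA _ (c t)).
under eq_bigr => x _ do rewrite -big_distrr /=.
under eq_bigr => x _ do
  rewrite (sum_pick (fun y => c t * (cost x r y)%:R)) ?uniq_supp ?supp2 //.
rewrite (sum_pick (fun x => c t * (cost x r (nth_config P' t.1.2))%:R)) ?uniq_supp ?supp1 //.
by rewrite /c natrM mulrAC.
Qed.

End TransportPlans.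

Definition kdist120 (s : kstate) : seq (nat * config) :=
  match s with
  | SA a b c => [:: (120, c3 a b c)]
  | SB a b c d => [:: (40, c3 a b c); (40, c3 a b d); (40, c3 a c d)]
  | SC a b c d => [:: (60, c3 a b c); (60, c3 a b d)]
  | SD a b c d e => [:: (20, c3 a b c); (20, c3 a b d); (20, c3 a b e);
                        (20, c3 a c d); (20, c3 a c e); (20, c3 a d e)]
  | SE a b c d e => [:: (60, c3 a b c); (30, c3 a b d); (30, c3 a b e)]
  | SF a b c d e => [:: (60, c3 a b c); (15, c3 a b d); (15, c3 a b e);
                        (15, c3 a c d); (15, c3 a c e)]
  end%N.

Lemma kdist120_pos s : all (fun q => 0 < q.1)%N (kdist120 s).
Proof. by case: s. Qed.

(* The mixture of successors weighted [m / 60], with all weights multiplied by 120. *)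
Definition mix120 (l : seq (nat * kstate)) : seq (nat * config) :=
  flatten [seq [seq (p.1 * q.1 %/ 60, q.2)%N | q <- kdist120 p.2] | p <- l].

Section Certificates.
Variable R : realType.

Lemma eq_weighted_cons (T : Type) (u v : R) (x : T) l l' :
  u = v -> l = l' -> (u, x) :: l = (v, x) :: l'.
Proof. by move=> -> ->. Qed.

Lemma eq_weights_cons (u v : R) (l l' : seq R) : u = v -> l = l' -> u :: l = v :: l'.
Proof. by move=> -> ->. Qed.

Lemma kdist_nat s : kdist s = nat_distr R 120 (kdist120 s).
Proof.
by case: s => * /=; rewrite /nat_distr /=; repeat (apply: eq_weighted_cons; first lra).
Qed.

Lemma mixture_nat (l : seq (nat * kstate)) :
  all (fun p => all (fun q => 60 %| p.1 * q.1) (kdist120 p.2))%N l ->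
  mixture [seq (p.1%:R / 60, p.2) | p <- l] = nat_distr R 120 (mix120 l).
Proof.
rewrite /mixture /mix120; elim: l => [|[m s] l IH] //= /andP [dvd dvdl].
rewrite /nat_distr map_cat; congr (_ ++ _); last exact: IH.
rewrite kdist_nat /nat_distr -!map_comp; apply/eq_in_map => -[w z] wz /=.
have /dvdnP [k mw] := allP dvd _ wz; rewrite /= in mw.
by rewrite mw mulnK // mulf_div -natrM mw natrM; congr (_, _); field.
Qed.

Lemma weighted_zip (L : seq (R * kstate)) (ms : seq nat) :
  map fst L = [seq m%:R / 60 | m <- ms] ->
  L = [seq (p.1%:R / 60, p.2) | p <- zip ms (map snd L)].
Proof. by elim: L ms => [|[u x] L IH] [|m ms] //= [-> /IH <-]. Qed.

(* The last hypothesis is the amortized inequality multiplied by 720, with the step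
   cost replaced by its bound [K / 120]. *)
Lemma amortized_of_certificate s r (ms : seq nat) tau (K : nat) :
  let l := zip ms (map snd (@ktrans R s r)) in
  map fst (@ktrans R s r) = [seq m%:R / 60 | m <- ms] ->
  all (fun p => all (fun q => 60 %| p.1 * q.1) (kdist120 p.2))%N l ->
  all (fun q => 0 < q.1)%N (mix120 l) ->
  is_plan (kdist120 s) (mix120 l) tau ->
  (plan_cost r (kdist120 s) (mix120 l) tau <= K)%N ->
  (forall y, #|` y| = 3%N ->
     6 * K + sumn [seq p.1 * (22 * omega p.2 y + phi_offset p.2) | p <- l]
       <= 60 * (22 * ocost s r y + phi_offset s))%N ->
  amortized R s r.
Proof.
move=> l weights dvd pos plan costK pot y hy.
have trE : ktrans s r = [seq (p.1%:R / 60, p.2) | p <- l] := weighted_zip weights.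
have step : @kstep_cost R s r <= K%:R / 120.
  rewrite /kstep_cost trE mixture_nat // kdist_nat.
  apply: le_trans (@dcost_le_plan R 120 _ _ tau r _ (kdist120_pos s) pos plan) _ => //.
  by rewrite ler_pM2r ?invr_gt0 ?ltr0n // ler_nat.
have sumPhi : \sum_(p <- @ktrans R s r) p.1 * Phi R p.2 y =
              (sumn [seq p.1 * (22 * omega p.2 y + phi_offset p.2) | p <- l])%:R / 720.
  rewrite trE big_map sumnE big_map natr_sum mulr_suml; apply: eq_bigr => p _.
  by rewrite /Phi /= natrM natrD natrM; field.
have := pot y hy; rewrite -(ler_nat R) natrD natrM natrM natrD natrM => potR.
rewrite sumPhi; lra.
Qed.

End Certificates.

(* Besides membership of the involved pages, the only property of [y] used is that
   it contains at most three of them. *)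
Ltac potential_check :=
  let y := fresh "y" in let hy := fresh "hy" in
  move=> y hy;
  lazymatch goal with |- context [ocost ?s ?r y] =>
    have := count_mem_le_card y (r :: pages s) end;
  rewrite hy ocostE // /omega /minl; page_simpl; rewrite ?dist_c3 ?in_c3; page_simpl;
  repeat lazymatch goal with |- context [?p \in y] => case: (p \in y) end.

Ltac certify ms tau K :=
  apply: (@amortized_of_certificate _ _ _ ms tau K);
  [ rewrite /ktrans; page_simpl; repeat (apply: eq_weights_cons; first lra)
  | page_simpl | page_simpl | page_simpl
  | rewrite /plan_cost /nth_config; page_simpl;
    rewrite !costE !eq_configE ?dist_c3 ?in_c3; page_simpl
  | potential_check ].

Section States.
Variable R : realType.
Local Open Scope nat_scope.

Lemma amortized_SA a b c r : wf (SA a b c) -> amortized R (SA a b c) r.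
Proof.
move=> ws; have pg := ws; distinct_pages pg.
have [->|ra] := eqVneq r a;
  first by certify [:: 60] [:: (0, 0, 120)] 0.
have [->|rb] := eqVneq r b;
  first by certify [:: 60] [:: (0, 0, 120)] 0.
have [->|rc] := eqVneq r c;
  first by certify [:: 60] [:: (0, 0, 120)] 0.
by eqF_hyps; certify [:: 60] [:: (0, 0, 40); (0, 1, 40); (0, 2, 40)] 120.
Qed.

Lemma amortized_SB a b c d r : wf (SB a b c d) -> amortized R (SB a b c d) r.
Proof.
move=> ws; have pg := ws; distinct_pages pg.
have [->|ra] := eqVneq r a;
  first by certify [:: 60] [:: (0, 0, 40); (1, 1, 40); (2, 2, 40)] 0.
have [->|rb] := eqVneq r b;
  first by certify [:: 60] [:: (0, 0, 40); (1, 1, 40); (2, 0, 20); (2, 1, 20)] 40.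
have [->|rc] := eqVneq r c;
  first by certify [:: 60] [:: (0, 0, 40); (1, 0, 20); (1, 1, 20); (2, 1, 40)] 40.
have [->|rd] := eqVneq r d;
  first by certify [:: 60] [:: (0, 0, 20); (0, 1, 20); (1, 0, 40); (2, 1, 40)] 40.
by eqF_hyps; certify [:: 60] [:: (0, 1, 20); (0, 3, 20); (1, 0, 20); (1, 4, 20);
  (2, 2, 20); (2, 5, 20)] 120.
Qed.

Lemma amortized_SC a b c d r : wf (SC a b c d) -> amortized R (SC a b c d) r.
Proof.
move=> ws; have pg := ws; distinct_pages pg.
have [->|ra] := eqVneq r a;
  first by certify [:: 60] [:: (0, 0, 60); (1, 1, 60)] 0.
have [->|rb] := eqVneq r b;
  first by certify [:: 60] [:: (0, 0, 60); (1, 1, 60)] 0.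
have [->|rc] := eqVneq r c;
  first by certify [:: 60] [:: (0, 0, 60); (1, 0, 60)] 60.
have [->|rd] := eqVneq r d;
  first by certify [:: 60] [:: (0, 0, 60); (1, 0, 60)] 60.
by eqF_hyps; certify [:: 60] [:: (0, 0, 30); (0, 1, 15); (0, 3, 15); (1, 0, 30);
  (1, 2, 15); (1, 4, 15)] 120.
Qed.

Lemma amortized_SD a b c d e r : wf (SD a b c d e) -> amortized R (SD a b c d e) r.
Proof.
move=> ws; have pg := ws; distinct_pages pg.
have [->|ra] := eqVneq r a;
  first by certify [:: 60] [:: (0, 0, 20); (1, 1, 20); (2, 2, 20); (3, 3, 20);
    (4, 4, 20); (5, 5, 20)] 0.
have [->|rb] := eqVneq r b;
  first by certify [:: 60] [:: (0, 0, 20); (1, 1, 20); (2, 2, 20); (3, 0, 20);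
    (4, 0, 20); (5, 1, 10); (5, 2, 10)] 60.
have [->|rc] := eqVneq r c;
  first by certify [:: 60] [:: (0, 0, 20); (1, 0, 20); (2, 0, 20); (3, 1, 20);
    (4, 2, 20); (5, 1, 10); (5, 2, 10)] 60.
have [->|rd] := eqVneq r d;
  first by certify [:: 60] [:: (0, 0, 20); (1, 0, 20); (2, 0, 20); (3, 1, 20);
    (4, 1, 10); (4, 2, 10); (5, 2, 20)] 60.
have [->|re] := eqVneq r e;
  first by certify [:: 60] [:: (0, 0, 20); (1, 0, 20); (2, 0, 20); (3, 1, 10);
    (3, 2, 10); (4, 1, 20); (5, 2, 20)] 60.
by eqF_hyps; certify (nseq 10 6) [:: (0, 1, 8); (0, 4, 12); (1, 0, 4); (1, 2, 4);
  (1, 5, 12); (2, 0, 8); (2, 6, 12); (3, 2, 8); (3, 7, 12); (4, 1, 4); (4, 3, 4);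
  (4, 8, 12); (5, 3, 8); (5, 9, 12)] 120.
Qed.

Lemma amortized_SE a b c d e r : wf (SE a b c d e) -> amortized R (SE a b c d e) r.
Proof.
move=> ws; have pg := ws; distinct_pages pg.
have [->|ra] := eqVneq r a;
  first by certify [:: 60] [:: (0, 0, 60); (1, 1, 30); (2, 2, 30)] 0.
have [->|rb] := eqVneq r b;
  first by certify [:: 60] [:: (0, 0, 60); (1, 1, 30); (2, 2, 30)] 0.
have [->|rc] := eqVneq r c;
  first by certify [:: 60] [:: (0, 0, 60); (1, 0, 30); (2, 0, 30)] 60.
have [->|rd] := eqVneq r d;
  first by certify [:: 60] [:: (0, 0, 60); (1, 0, 30); (2, 0, 30)] 90.
have [->|re] := eqVneq r e;
  first by certify [:: 60] [:: (0, 0, 60); (1, 0, 30); (2, 0, 30)] 90.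
by eqF_hyps; certify [:: 60] [:: (0, 0, 60); (1, 0, 30); (2, 0, 30)] 120.
Qed.

Lemma amortized_SF a b c d e r : wf (SF a b c d e) -> amortized R (SF a b c d e) r.
Proof.
move=> ws; have pg := ws; distinct_pages pg.
have [->|ra] := eqVneq r a;
  first by certify [:: 60] [:: (0, 0, 60); (1, 1, 15); (2, 2, 15); (3, 3, 15);
    (4, 4, 15)] 0.
have [->|rb] := eqVneq r b;
  first by certify [:: 60] [:: (0, 0, 60); (1, 1, 15); (2, 2, 15); (3, 1, 15);
    (4, 2, 15)] 30.
have [->|rc] := eqVneq r c;
  first by certify [:: 60] [:: (0, 0, 60); (1, 1, 15); (2, 2, 15); (3, 1, 15);
    (4, 2, 15)] 30.
have [->|rd] := eqVneq r d;
  first by certify [:: 60] [:: (0, 0, 30); (0, 1, 30); (1, 0, 15); (2, 0, 15);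
    (3, 1, 15); (4, 1, 15)] 90.
have [->|re] := eqVneq r e;
  first by certify [:: 60] [:: (0, 0, 30); (0, 1, 30); (1, 0, 15); (2, 0, 15);
    (3, 1, 15); (4, 1, 15)] 90.
by eqF_hyps; certify (nseq 6 10) [:: (0, 0, 10); (0, 1, 10); (0, 2, 10); (0, 3, 10);
  (0, 4, 10); (0, 5, 10); (1, 6, 5); (1, 8, 10); (2, 7, 5); (2, 9, 10); (3, 6, 5);
  (3, 10, 10); (4, 7, 5); (4, 11, 10)] 120.
Qed.

Lemma amortized_all s r : wf s -> amortized R s r.
Proof.
by case: s => *;
  [apply: amortized_SA|apply: amortized_SB|apply: amortized_SC
  |apply: amortized_SD|apply: amortized_SE|apply: amortized_SF].
Qed.

End States.

Theorem mainTheorem13 (R : realType) (a b c : nat) :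
  uniq [:: a; b; c] ->
  exists K : R, forall rho : seq nat,
    kexp_cost (SA a b c) rho <= 11 / 6 * cost_opt (c3 a b c) rho + K.
Proof.
move=> abc; exists 0 => rho; rewrite addr0.
by have := kexp_cost_le_opt (fun s => @amortized_all R s) rho abc.
Qed.
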